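(* Let $A\in\mathbb{C}^{m\times n}$ and $X\in\mathbb{C}^{n\times m}$. Then the following are equivalent: (1) $X\in A\{1,3^{\mathfrak{m}}\}$; (2) $A^{\sim}AX=A^{\sim}$; (3) $AX=P_{\mathcal{R}(A),\mathcal{N}(A^{\sim})}$. In this case, $$A\{1,3^{\mathfrak{m}}\}=\left\{A^{(1,3^{\mathfrak{m}})}+(I_n-A^{(1,3^{\mathfrak{m}})}A)Y : Y\in\mathbb{C}^{n\times m}\right\},$$ where $A^{(1,3^{\mathfrak{m}})}\in A\{1,3^{\mathfrak{m}}\}$ is fixed but arbitrary.
   Context: For a positive integer $k$, the Minkowski metric matrix of order $k$ is $G_k=\mathrm{diag}(1,-I_{k-1})$ (with $G_1=(1)$). For $A\in\mathbb{C}^{m\times n}$, the Minkowski adjoint is $A^{\sim}=G_nA^*G_m$, where $A^*$ is the conjugate transpose. For $A\in\mathbb{C}^{m\times n}$ and $X\in\mathbb{C}^{n\times m}$ consider the equations $(1)\ AXA=A$, $(2)\ XAX=X$, $(3^{\mathfrak{m}})\ (AX)^{\sim}=AX$, $(4^{\mathfrak{m}})\ (XA)^{\sim}=XA$; $A\{i,\dots,k\}$ denotes the set of all $X$ satisfying the listed equations. $\mathcal{R}(\cdot)$ and $\mathcal{N}(\cdot)$ denote range and null space. For subspaces $\mathcal{S},\mathcal{T}\subseteq\mathbb{C}^m$ with $\mathcal{S}\oplus\mathcal{T}=\mathbb{C}^m$, $P_{\mathcal{S},\mathcal{T}}$ denotes the projector onto $\mathcal{S}$ along $\mathcal{T}$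 (statement (3) includes that this direct sum holds). *)

From HB Require Import structures.
From mathcomp Require Import all_boot all_order all_algebra.
From mathcomp Require Import reals complex.
Set Implicit Arguments. Unset Strict Implicit. Unset Printing Implicit Defensive.
Import Order.TTheory GRing.Theory Num.Theory.
Local Open Scope ring_scope.

Definition minkG (C : ringType) (k : nat) : 'M[C]_k :=
  \matrix_(i < k, j < k)
    (if i == j then (if (i : nat) == 0%N then 1 else -1) else 0).

Definition ctr (C : numClosedFieldType) (m n : nat) (A : 'M[C]_(m, n))
  : 'M[C]_(n, m) := (map_mx Num.conj A)^T.

Definition madj (C : numClosedFieldType) (m n : nat) (A : 'M[C]_(m, n))
  : 'M[C]_(n, m) := minkG C n *m ctr A *m minkG C m.

Definition mink13 (C : numClosedFieldType) (m n : nat)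
  (A : 'M[C]_(m, n)) (X : 'M[C]_(n, m)) : Prop :=
  A *m X *m A = A /\ madj (A *m X) = A *m X.

Definition mrange (C : ringType) (m n : nat) (A : 'M[C]_(m, n)) (v : 'cV[C]_m) : Prop :=
  exists u : 'cV[C]_n, v = A *m u.
Definition mnull (C : ringType) (m n : nat) (B : 'M[C]_(m, n)) (v : 'cV[C]_n) : Prop :=
  B *m v = 0.

Definition full_direct_sum (C : ringType) (m : nat) (S T : 'cV[C]_m -> Prop) : Prop :=
  (forall x : 'cV[C]_m, exists s t, S s /\ T t /\ x = s + t) /\
  (forall v : 'cV[C]_m, S v -> T v -> v = 0).

Definition is_proj_onto_along (C : ringType) (m : nat) (S T : 'cV[C]_m -> Prop)
  (P : 'M[C]_m) : Prop :=
  full_direct_sum S T /\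
  (forall s t : 'cV[C]_m, S s -> T t -> P *m (s + t) = s).

From HB Require Import structures.
From mathcomp Require Import all_boot all_order all_algebra.
From mathcomp Require Import reals complex.
Import Order.TTheory GRing.Theory Num.Theory.
Local Open Scope ring_scope.
Local Open Scope complex_scope.

(* Only two properties of the Minkowski adjoint are used: it reverses products
   and is an involution, since G_k is a real diagonal involution.  If AXA = A
   and (AX)~ = AX, then A~AX = A~(AX)~ = (AXA)~ = A~.  Conversely, adjoining
   A~AX = A~ gives X~A~A = A, whence (AX)~ = X~A~ = X~A~AX = AX and
   AXA = (AX)~A = A.  Then AX fixes R(A) and kills N(A~), since
   AXt = X~A~t, and x = AXx + (x - AXx) with A~(x - AXx) = 0: AX is the
   projector P_{R(A),N(A~)}.  For X, Z in A{1,3^m},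
   AZ = (AXAZ)~ = (AZ)~(AX)~ = AZAX = AX, which gives the parametrisation. *)

Lemma mx_colP (C : pzRingType) p q (M N : 'M[C]_(p, q)) :
  (forall v : 'cV[C]_q, M *m v = N *m v) -> M = N.
Proof.
move=> eqMN; apply/matrixP => i j.
have := congr1 (fun W : 'cV[C]_p => W i ord0) (eqMN (delta_mx j ord0)).
by rewrite -!colE !mxE.
Qed.

Section MinkowskiAdjoint.
Context {C : numClosedFieldType}.

Lemma minkG_invol k : minkG C k *m minkG C k = 1%:M.
Proof.
apply/matrixP => i j; rewrite !mxE (bigD1 i) //= big1 => [|l /negbTE nli].
  rewrite !mxE eqxx addr0; have [->|_] := eqVneq i j; last by rewrite mulr0.
  by case: ifP; rewrite ?mulr1 ?mulrNN ?mulr1.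
by rewrite !mxE eq_sym nli mul0r.
Qed.

Lemma ctr_minkG k : ctr (minkG C k) = minkG C k.
Proof.
apply/matrixP => i j; rewrite /ctr !mxE eq_sym.
case: eqVneq => [->|_]; last by rewrite rmorph0.
by case: ifP; rewrite ?rmorphN rmorph1.
Qed.

Lemma ctrM p q r (A : 'M[C]_(p, q)) (B : 'M[C]_(q, r)) :
  ctr (A *m B) = ctr B *m ctr A.
Proof. by rewrite /ctr map_mxM trmx_mul. Qed.

Lemma ctrK p q (A : 'M[C]_(p, q)) : ctr (ctr A) = A.
Proof. by apply/matrixP => i j; rewrite /ctr !mxE conjCK. Qed.

Lemma madjM p q r (A : 'M[C]_(p, q)) (B : 'M[C]_(q, r)) :
  madj (A *m B) = madj B *m madj A.
Proof.
rewrite /madj ctrM !mulmxA -[_ *m minkG C q *m minkG C q]mulmxA.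
by rewrite minkG_invol mulmx1.
Qed.

Lemma madjK p q (A : 'M[C]_(p, q)) : madj (madj A) = A.
Proof.
rewrite /madj !ctrM ctrK !ctr_minkG !mulmxA minkG_invol mul1mx.
by rewrite -mulmxA minkG_invol mulmx1.
Qed.

End MinkowskiAdjoint.

Section InvolutiveAdjoint.
Context {C : nzRingType} {adjoint : forall p q, 'M[C]_(p, q) -> 'M[C]_(q, p)}.
Local Notation adj := (adjoint _ _).
Hypothesis adjM : forall p q r (A : 'M[C]_(p, q)) (B : 'M[C]_(q, r)),
  adj (A *m B) = adj B *m adj A.
Hypothesis adjK : forall p q (M : 'M[C]_(p, q)), adj (adj M) = M.
Context {m n : nat} (A : 'M[C]_(m, n)).

Definition inv13 (X : 'M[C]_(n, m)) : Prop :=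
  A *m X *m A = A /\ adj (A *m X) = A *m X.

Lemma inv13_normal_eq X : inv13 X -> adj A *m A *m X = adj A.
Proof. by case=> AXA sym; rewrite -mulmxA -{1}sym -adjM AXA. Qed.

Lemma inv13_mulmx_eq X Z : inv13 X -> inv13 Z -> A *m Z = A *m X.
Proof.
move=> [AXA symX] [AZA symZ].
by rewrite -[LHS]symZ -{1}AXA -mulmxA adjM symZ symX mulmxA AZA.
Qed.

Lemma inv13_general_solution X Z : inv13 X ->
  inv13 Z <-> exists Y : 'M[C]_(n, m), Z = X + (1%:M - X *m A) *m Y.
Proof.
move=> solX; split=> [solZ | [Y ->]].
  have AZ_AX := inv13_mulmx_eq _ _ solX solZ.
  exists (Z - X).
  by rewrite mulmxBl mul1mx -mulmxA mulmxBr AZ_AX subrr mulmx0 subr0 addrC subrK.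
rewrite /inv13 (_ : A *m _ = A *m X) //.
by rewrite mulmxDr mulmxA mulmxBr mulmx1 mulmxA solX.1 subrr mul0mx addr0.
Qed.

Lemma normal_eq_inv13 X : adj A *m A *m X = adj A -> inv13 X.
Proof.
move=> normal.
have XAA : adj X *m adj A *m A = A.
  by have := congr1 adj normal; rewrite !adjM adjK mulmxA.
have sym : adj (A *m X) = A *m X.
  by rewrite adjM -[in RHS]XAA -!mulmxA (mulmxA (adj A)) normal.
by split=> //; rewrite -{1}sym adjM XAA.
Qed.

Lemma normal_eq_projector X : adj A *m A *m X = adj A ->
  is_proj_onto_along (mrange A) (mnull (adj A)) (A *m X).
Proof.
move=> normal; have [AXA sym] := normal_eq_inv13 _ normal.
have AX_null t : mnull (adj A) t -> A *m X *m t = 0.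
  by rewrite /mnull => At0; rewrite -sym adjM -mulmxA At0 mulmx0.
have AX_range u : A *m X *m (A *m u) = A *m u by rewrite mulmxA AXA.
split; first split.
- move=> x; exists (A *m X *m x), (x - A *m X *m x).
  split; first by exists (X *m x); rewrite mulmxA.
  by rewrite /mnull mulmxBr !mulmxA normal subrr addrC subrK.
- by move=> _ [u ->] /AX_null; rewrite AX_range.
- by move=> _ t [u ->] /AX_null; rewrite mulmxDr AX_range => ->; rewrite addr0.
Qed.

End InvolutiveAdjoint.

Lemma projector_normal_eq (C : nzRingType) m n p (A : 'M[C]_(m, n))
    (B : 'M[C]_(p, m)) (P : 'M[C]_m) :
  is_proj_onto_along (mrange A) (mnull B) P -> B *m P = B.
Proof.
move=> [[decomp _] projP]; apply: mx_colP => x.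
have [s [t [Rs [Nt ->]]]] := decomp x.
by rewrite -mulmxA projP // mulmxDr Nt addr0.
Qed.

Theorem theorem4p3 (R : realType) (m n : nat) (hm : (0 < m)%N) (hn : (0 < n)%N)
    (A : 'M[R[i]]_(m, n)) (X : 'M[R[i]]_(n, m)) :
  (mink13 A X <-> madj A *m A *m X = madj A) /\
  (madj A *m A *m X = madj A <->
     is_proj_onto_along (mrange A) (mnull (madj A)) (A *m X)) /\
  (forall A1 : 'M[R[i]]_(n, m), mink13 A A1 ->
     forall Z : 'M[R[i]]_(n, m),
       mink13 A Z <-> exists Y : 'M[R[i]]_(n, m), Z = A1 + (1%:M - A1 *m A) *m Y).
Proof.
split; [|split].
- split; first exact: (inv13_normal_eq madjM A X).
  exact: (normal_eq_inv13 madjM madjK A X).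
- split; first exact: (normal_eq_projector madjM madjK A X).
  by move/projector_normal_eq; rewrite mulmxA.
- move=> A1 solA1 Z; exact: (inv13_general_solution (@madjM R[i]) A A1 Z solA1).
Qed.
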